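(* Let either $n\ge 3$ and $k\ge 4$, or $n\ge 4$ and $k=3$. Let $\alpha=a_1\cdots a_n\in\mathbf{A}_k(n)\setminus\{r_{n,k}\}$ be such that $\mathrm{LastNonMax}(\alpha)\notin\mathbf{A}_k(n)$ and $\mathrm{LastSymbol}(\alpha)\notin\mathbf{A}_k(n)$. If $k\ge 4$, then $\mathrm{FirstNonMin}(\alpha)\in\mathbf{A}_k(n)$. If $k=3$ and $\mathrm{FirstNonMin}(\alpha)\notin\mathbf{A}_3(n)$, then $\alpha=0\gamma 012$ for some palindrome $\gamma$, and $\mathrm{SecondLastNonMax}(\alpha)\in\mathbf{A}_3(n)$.
   Context: Let $\Sigma=\{0,1,\dots,k-1\}$. Strings are compared lexicographically ($\alpha<\beta$ if $\alpha$ is a proper prefix of $\beta$, or $\alpha$ has the smaller symbol at the first index where they differ). For $\alpha=a_1\cdots a_n$, $\alpha^R=a_n\cdots a_1$; $\alpha$ is a palindrome if $\alpha=\alpha^R$; $[\alpha]$ is the set of rotations of $\alpha$. $\alpha$ is a necklace if it is the lexicographically smallest element of $[\alpha]$; a bracelet if it is the lexicographically smallest element of $[\alpha]\cup[\alpha^R]$. A necklace $\alpha$ is symmetric if $\alpha^R\in[\alpha]$, asymmetric otherwise. $\mathbf{A}_k(n)$ is the set of asymmetric bracelets of length $n$ over $\Sigma$. $r_{n,k}=0^{n-2}(k-2)(k-1)$. Operations on $\alpha=a_1\cdots a_n$: $\mathrm{LastNonMax}(\alpha)=a_1\cdots a_{j-1}(a_j+1)(k-1)^{n-j}$, where $j$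 is the index of the last symbol different from $k-1$; $\mathrm{LastSymbol}(\alpha)$ is the necklace (smallest rotation) of $a_1\cdots a_{n-1}((a_n+1)\bmod k)$; $\mathrm{FirstNonMin}(\alpha)=0^{i-1}(a_i-1)a_{i+1}\cdots a_n$, where $i$ is the index of the first nonzero symbol; $\mathrm{SecondLastNonMax}(\alpha)=a_1\cdots a_{\ell-1}(a_\ell+1)a_{\ell+1}\cdots a_n$, where $\ell$ is the index of the second-last symbol different from $k-1$. *)

(* Strings over {0,...,k-1} are represented as seq nat
   whose entries are all < k; indices below are 0-based. *)
From mathcomp Require Import all_boot.
Set Implicit Arguments. Unset Strict Implicit. Unset Printing Implicit Defensive.

Fixpoint lexle (s t : seq nat) : bool :=
  match s, t with
  | [::], _ => true
  | _ :: _, [::] => false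
  | a :: s', b :: t' => (a < b) || ((a == b) && lexle s' t')
  end.

Definition rotations (s : seq nat) : seq (seq nat) :=
  [seq rot i s | i <- iota 0 (size s)].

Definition is_necklace (s : seq nat) : bool :=
  all (fun t => lexle s t) (rotations s).

Definition is_bracelet (s : seq nat) : bool :=
  all (fun t => lexle s t) (rotations s ++ rotations (rev s)).

Definition is_symmetric (s : seq nat) : bool := rev s \in rotations s.

Definition inA (k n : nat) (s : seq nat) : bool :=
  [&& size s == n, all (fun a => a < k) s, is_bracelet s & ~~ is_symmetric s].

Definition rnk (n k : nat) : seq nat := nseq (n - 2) 0 ++ [:: k - 2; k - 1].

Definition neck (s : seq nat) : seq nat :=
  foldl (fun m t => if lexle t m then t else m) s (rotations s).

Definition nonmax_idx (k : nat) (s : seq nat) : seq nat :=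
  [seq i <- iota 0 (size s) | nth 0 s i != k - 1].

Definition LastNonMax (k : nat) (s : seq nat) : seq nat :=
  let j := last 0 (nonmax_idx k s) in
  take j s ++ (nth 0 s j).+1 :: nseq (size s - j.+1) (k - 1).

Definition LastSymbol (k : nat) (s : seq nat) : seq nat :=
  neck (take (size s).-1 s ++ [:: (nth 0 s (size s).-1).+1 %% k]).

Definition FirstNonMin (s : seq nat) : seq nat :=
  let i := find (fun a => a != 0) s in
  nseq i 0 ++ (nth 0 s i).-1 :: drop i.+1 s.

Definition SecondLastNonMax (k : nat) (s : seq nat) : seq nat :=
  let idx := nonmax_idx k s in
  let l := nth 0 idx (size idx - 2) in
  take l s ++ (nth 0 s l).+1 :: drop l.+1 s.

(* A word lies in A_k(n) iff it is lexicographically below all its rotations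
   and strictly below all rotations of its reversal.  The basic tool: if raising
   one symbol a_j of such a word leaves A_k(n), then some nontrivial rotation or
   reflection agrees with the word before position j and maps a later position
   onto j.  For LastNonMax this forces a_{n-1} = k-1 and, when a_{n-2} < k-1,
   forces a_{n-2} = k-2 with a_0 ... a_{n-3} a palindrome.  If a_{n-2} exceeded
   the first nonzero symbol x, then setting the last symbol to 0 and rotating it
   to the front would give a word of A_k(n), namely LastSymbol(alpha); hence
   a_{n-2} <= x.  Lowering x keeps the word in A_k(n) as soon as x >= 2, which
   settles k >= 4.  For k = 3 this leaves x = 1; x cannot be a_0, since lowering
   a leading 1 of such a word also stays in A_3(n).  So alpha = 0 gamma 0 1 2,
   and raising its third-last symbol stays in A_3(n) unless alpha = r_{n,3}. *)

From mathcomp Require Import all_boot zify.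
Set Implicit Arguments. Unset Strict Implicit. Unset Printing Implicit Defensive.

Lemma lexle_refl s : lexle s s.
Proof. by elim: s => //= a s ->; rewrite eqxx orbT. Qed.

Lemma lexle_antisym s t : size s = size t -> lexle s t -> lexle t s -> s = t.
Proof.
elim: s t => [|a s IH] [|b t] //= [Hs].
case: (ltngtP a b) => [Hab|Hab|<-].
- by move=> _ /orP[H|/andP[/eqP H _]]; lia.
- by move=> /orP[H|/andP[/eqP H _]]; lia.
- by rewrite ?eqxx ?ltnn /= => H1 H2; rewrite (IH t).
Qed.

Lemma negb_lexle s t : size s = size t -> ~~ lexle s t -> lexle t s && (t != s).
Proof.
elim: s t => [|a s IH] [|b t] //= [Hs].
rewrite negb_or negb_and -leqNgt => /andP[Hba H].
have [Hlt|Eab] : b < a \/ b = a by lia.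
  by rewrite Hlt /=; apply/eqP => -[E _]; rewrite E ltnn in Hlt.
rewrite Eab eqxx /= in H *.
have /andP[H1 H2] := IH t Hs H; rewrite H1 ltnn /=.
by apply/eqP => -[E]; rewrite E eqxx in H2.
Qed.

Lemma lexle_nth s t i : size s = size t -> lexle s t ->
  (forall l, l < i -> nth 0 s l = nth 0 t l) -> i < size s -> nth 0 s i <= nth 0 t i.
Proof.
elim: s t i => [|a s IH] [|b t] i //= [Hs] H Hpre Hi.
case: i Hpre Hi => [|i] Hpre Hi /=.
  by case/orP: H => [/ltnW|/andP[/eqP-> _]].
have Eab := Hpre 0 isT; rewrite /= in Eab; subst b.
rewrite ltnn eqxx /= in H.
by apply: IH => // l Hl; apply: (Hpre l.+1).
Qed.

Lemma lexlt_nth s t i : size s = size t -> i < size s ->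
  (forall l, l < i -> nth 0 s l = nth 0 t l) -> nth 0 s i < nth 0 t i ->
  lexle s t && (s != t).
Proof.
elim: s t i => [|a s IH] [|b t] i //= [Hs] Hi Hpre.
case: i Hi Hpre => [|i] Hi Hpre /= Hlt.
  by rewrite Hlt /=; apply/eqP => -[E _]; rewrite E ltnn in Hlt.
have Eab := Hpre 0 isT; rewrite /= in Eab; subst b.
have /andP[H1 H2] := IH t i Hs Hi (fun l Hl => Hpre l.+1 Hl) Hlt.
by rewrite ltnn eqxx H1 /=; apply/eqP => -[E]; rewrite E eqxx in H2.
Qed.

Lemma lexle_sandwich a y0 y b m :
  size y0 = size a -> size y = size a -> size b = size a -> m <= size a ->
  lexle a y0 -> lexle y b ->
  (forall i, i < m -> nth 0 y0 i + nth 0 b i <= nth 0 y i + nth 0 a i) ->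
  forall i, i < m -> nth 0 y0 i = nth 0 a i /\ nth 0 y i = nth 0 b i.
Proof.
move=> S0 S1 S2 Hm Hay0 Hyb Hgap.
elim/ltn_ind => i IH Hi.
have Hia : i < size a := leq_trans Hi Hm.
have A1 := lexle_nth (esym S0) Hay0 (fun l Hl => esym (IH l Hl (ltn_trans Hl Hi)).1) Hia.
have A2 := lexle_nth (etrans S1 (esym S2)) Hyb (fun l Hl => (IH l Hl (ltn_trans Hl Hi)).2).
rewrite S1 in A2; move: (A2 Hia) => {}A2.
have := Hgap i Hi; lia.
Qed.

Lemma lexle_prefix_eq s t L : size s = size t -> L <= size s -> lexle s t ->
  (forall i, i < L -> nth 0 t i <= nth 0 s i) ->
  forall i, i < L -> nth 0 s i = nth 0 t i.
Proof.
move=> Hs HL Hst Hle i Hi.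
have Hgap j : j < L -> nth 0 t j + nth 0 s j <= nth 0 s j + nth 0 s j.
  by move=> Hj; rewrite leq_add2r Hle.
by case: (lexle_sandwich (esym Hs) erefl erefl HL Hst (lexle_refl s) Hgap Hi).
Qed.

Lemma lexlt_zero_prefix w y L : size w = size y -> L <= size w ->
  (forall i, i < L -> nth 0 w i = 0) -> (exists2 i, i < L & nth 0 y i != 0) ->
  lexle w y && (y != w).
Proof.
move=> Hs HL Hz [i Hi Hy].
case: (boolP (lexle w y)) => H /=.
  by apply/eqP => E; rewrite E Hz in Hy.
have /andP[Hyw _] := negb_lexle Hs H.
have HL' : L <= size y by rewrite -Hs.
have Hle j : j < L -> nth 0 w j <= nth 0 y j by move=> Hj; rewrite Hz.
by move: Hy; rewrite (lexle_prefix_eq (esym Hs) HL' Hyw Hle Hi) Hz ?eqxx.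
Qed.

Definition rotation_index n p i := if p + i < n then p + i else p + i - n.

Definition dihedral (rv : bool) p (s : seq nat) := if rv then rot p (rev s) else rot p s.

Definition dihedral_index n (rv : bool) p i :=
  if rv then n - 1 - rotation_index n p i else rotation_index n p i.

Lemma rotation_index_lt n p i : p < n -> i < n -> rotation_index n p i < n.
Proof. rewrite /rotation_index; case: ifP; lia. Qed.

Lemma nth_rot s p i : p < size s -> i < size s ->
  nth 0 (rot p s) i = nth 0 s (rotation_index (size s) p i).
Proof.
move=> Hp Hi; rewrite /rot nth_cat size_drop /rotation_index.
case: ifP => H; first by rewrite nth_drop ifT //; lia.
rewrite nth_take; last lia.
by rewrite ifF; [congr nth | ]; lia.
Qed.

Lemma nth_rot_rev s p i : p < size s -> i < size s ->
  nth 0 (rot p (rev s)) i = nth 0 s (size s - 1 - rotation_index (size s) p i).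
Proof.
move=> Hp Hi; have Hr := rotation_index_lt Hp Hi.
by rewrite nth_rot ?size_rev // nth_rev ?size_rev //; congr nth; lia.
Qed.

Lemma size_dihedral rv p s : size (dihedral rv p s) = size s.
Proof. by case: rv; rewrite /dihedral size_rot ?size_rev. Qed.

Lemma nth_dihedral rv p s i : p < size s -> i < size s ->
  nth 0 (dihedral rv p s) i = nth 0 s (dihedral_index (size s) rv p i).
Proof. by case: rv => Hp Hi; rewrite /dihedral /dihedral_index ?nth_rot_rev ?nth_rot. Qed.

Lemma dihedral_index_lt n rv p i : p < n -> i < n -> dihedral_index n rv p i < n.
Proof. move=> Hp Hi; have := rotation_index_lt Hp Hi; case: rv; rewrite /dihedral_index; lia. Qed.

Lemma dihedral_index_inj n rv p i i' : p < n -> i < n -> i' < n ->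
  dihedral_index n rv p i = dihedral_index n rv p i' -> i = i'.
Proof.
move=> Hp Hi Hi'; have := rotation_index_lt Hp Hi; have := rotation_index_lt Hp Hi'.
case: rv; rewrite /dihedral_index /rotation_index; do 2 case: ifP; lia.
Qed.

Lemma dihedral_index_surj n rv p j : p < n -> j < n ->
  exists2 q, q < n & dihedral_index n rv p q = j.
Proof.
move=> Hp Hj; case: rv; rewrite /dihedral_index /rotation_index.
  exists (if p <= n - 1 - j then n - 1 - j - p else n - 1 - j + n - p);
    case: (leqP p (n - 1 - j)) => H1; try lia; case: ifP; lia.
exists (if p <= j then j - p else j + n - p);
  case: (leqP p j) => H1; try lia; case: ifP; lia.
Qed.

Lemma rotationsP s t : reflect (exists2 p, p < size s & t = rot p s) (t \in rotations s).
Proof.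
apply: (iffP mapP) => -[p Hp ->]; exists p => //; first by rewrite mem_iota in Hp.
by rewrite mem_iota.
Qed.

Lemma is_symmetricP s : reflect (exists2 p, p < size s & rot p (rev s) = s) (is_symmetric s).
Proof.
apply: (iffP (rotationsP _ _)) => -[p Hp E].
  case: (posnP p) => Hp0; first by exists 0; [lia | rewrite E Hp0 !rot0].
  by exists (size s - p); [lia | rewrite -size_rev -/(rotr p _) E rotK].
have E2 : rev s = rotr p s by rewrite -{2}E rotK.
case: (posnP p) => Hp0; first by exists 0; [lia | rewrite E2 Hp0 /rotr subn0 rot_size rot0].
by exists (size s - p); [lia | rewrite E2].
Qed.

Definition dihedral_least (s : seq nat) :=
  forall rv p, p < size s -> lexle s (dihedral rv p s) && (rv ==> (dihedral rv p s != s)).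

Lemma inAP k n s :
  inA k n s <-> [/\ size s = n, all (fun a => a < k) s & dihedral_least s].
Proof.
split.
  case/and4P => /eqP Hs Ha /allP Hb Hsym; split => // rv p Hp.
  case: rv; rewrite /dihedral /=; last first.
    by rewrite andbT; apply: Hb; rewrite mem_cat; apply/orP; left; apply/rotationsP; exists p.
  rewrite Hb /=; last by rewrite mem_cat; apply/orP; right; apply/rotationsP; exists p;
    rewrite ?size_rev.
  by apply: contraNneq Hsym => E; apply/is_symmetricP; exists p.
case=> Hs Ha Hmin; apply/and4P; split; rewrite ?Hs //.
  apply/allP => t; rewrite mem_cat => /orP[] /rotationsP [p Hp ->].
    by have /andP[] := Hmin false p Hp.
  by rewrite size_rev in Hp; have /andP[] := Hmin true p Hp.
by apply/negP => /is_symmetricP [p Hp E]; have /andP[_] := Hmin true p Hp; rewrite /= E eqxx.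
Qed.

Lemma notinA_dihedral k n s : size s = n -> all (fun a => a < k) s -> ~~ inA k n s ->
  exists rv p, p < n /\ lexle (dihedral rv p s) s && (rv || (dihedral rv p s != s)).
Proof.
move=> Hs Ha HnA.
pose bad rv p := lexle (dihedral rv p s) s && (rv || (dihedral rv p s != s)).
case: (boolP (has (fun p => bad false p || bad true p) (iota 0 n))).
  by case/hasP => p; rewrite mem_iota => Hp /orP[] H; [exists false | exists true]; exists p.
move/hasPn => Hgood; case/negP: HnA; apply/inAP; split => // rv p Hp.
have /norP[] : ~~ (bad false p || bad true p) by apply: Hgood; rewrite mem_iota -Hs.
rewrite /bad; case: rv => /= [_ H|H _]; rewrite ?andbT in H *;
  set y := rot p _ in H *.
all: have Sy : size s = size y by rewrite /y size_rot ?size_rev.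
all: case: (boolP (lexle s y)) => Hle /=.
- by apply/eqP => Eys; move: H; rewrite Eys lexle_refl.
- by case/andP: (negb_lexle Sy Hle) => H1 _; rewrite H1 in H.
- by [].
- by case/andP: (negb_lexle Sy Hle) => H1 H2; rewrite H1 H2 in H.
Qed.

Lemma foldl_lexmin w l m : lexle w m -> size m = size w ->
  all (fun t => lexle w t && (size t == size w)) l -> (w \in l) || (m == w) ->
  foldl (fun m t => if lexle t m then t else m) m l = w.
Proof.
elim: l m => [|t l IH] m Hm Sm /=; first by move=> _ /eqP.
case/andP => /andP[Ht /eqP St] Hl; rewrite in_cons => Hw.
apply: IH => //; try by case: ifP.
case/orP: Hw => [/orP[/eqP Ewt|->//]|/eqP Emw]; apply/orP; right.
  by rewrite -Ewt Hm.
by subst m; case: ifP => // H; apply/eqP; apply: lexle_antisym.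
Qed.

Lemma neck_rot s m : is_necklace s -> m < size s -> neck (rot m s) = s.
Proof.
move=> /allP Hneck Hm.
have Hrot q : lexle s (rot q s).
  case: (ltnP q (size s)) => Hq; last by rewrite rot_oversize // lexle_refl.
  by apply: Hneck; apply/rotationsP; exists q.
rewrite /neck; apply: foldl_lexmin; rewrite ?size_rot //.
  by apply/allP => _ /rotationsP [p _ ->]; rewrite rot_rot_add Hrot !size_rot eqxx.
apply/orP; left; apply/rotationsP; rewrite size_rot.
case: (posnP m) => [->|Hm0]; first by exists 0; rewrite ?rot0 //; lia.
by exists (size s - m); [lia | rewrite -{1}(rotK m s) /rotr size_rot].
Qed.

Lemma inA_nth_lt k n s i : inA k n s -> i < n -> nth 0 s i < k.
Proof. by case/and4P => /eqP <- /(all_nthP 0) Hk _ _; apply: Hk. Qed.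

Lemma inA_necklace k n s : inA k n s -> is_necklace s.
Proof.
case/and4P => _ _ /allP Hbr _; apply/allP => u Hu.
by apply: Hbr; rewrite mem_cat Hu.
Qed.

Lemma size_set_nth_lt (s : seq nat) j v : j < size s -> size (set_nth 0 s j v) = size s.
Proof. by move=> Hj; rewrite size_set_nth; apply/maxn_idPr. Qed.

Lemma lexle_set_nth s u j v : size s = size u -> nth 0 s j = nth 0 u j ->
  lexle (set_nth 0 s j v) (set_nth 0 u j v) = lexle s u.
Proof.
elim: s u j => [|a s IH] [|b u] [|j] //=; try by rewrite lexle_refl.
- by rewrite ltnn eqxx.
- by move=> _ ->; rewrite !ltnn !eqxx.
- by move=> [Hs] E; rewrite IH.
Qed.

Lemma eq_set_nth s u j v : size s = size u -> nth 0 s j = nth 0 u j ->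
  (set_nth 0 s j v == set_nth 0 u j v) = (s == u).
Proof.
elim: s u j => [|a s IH] [|b u] [|j] //=; try by rewrite !eqxx.
- by move=> _ ->; rewrite !eqseq_cons !eqxx.
- by move=> [Hs] E; rewrite !eqseq_cons IH.
Qed.

Lemma dihedral_set_nth rv p s q v : p < size s -> q < size s ->
  dihedral rv p (set_nth 0 s (dihedral_index (size s) rv p q) v) =
  set_nth 0 (dihedral rv p s) q v.
Proof.
move=> Hp Hq; have Hj := dihedral_index_lt rv Hp Hq.
apply: (@eq_from_nth _ 0); first by rewrite size_dihedral !size_set_nth_lt ?size_dihedral.
rewrite size_dihedral size_set_nth_lt // => i Hi.
rewrite nth_dihedral ?size_set_nth_lt // !nth_set_nth /= nth_dihedral //.
case: (eqVneq i q) => [->|Hiq]; first by rewrite eqxx.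
by rewrite ifF //; apply/eqP => /(dihedral_index_inj Hp Hi Hq) E; rewrite E eqxx in Hiq.
Qed.

Lemma inA_zero_prefix k n w L : size w = n -> all (fun a => a < k) w -> L <= n ->
  (forall i, i < L -> nth 0 w i = 0) ->
  (forall p, 0 < p < n -> exists2 i, i < L & nth 0 (rot p w) i != 0) ->
  (forall p, p < n -> p != n - L -> exists2 i, i < L & nth 0 (rot p (rev w)) i != 0) ->
  lexle w (rot (n - L) (rev w)) && (rot (n - L) (rev w) != w) -> inA k n w.
Proof.
move=> Hs Ha HL Hz Hrot Hrev Hspecial; apply/inAP; split => // -[] p; rewrite Hs => Hp /=.
  have [->|Hpn] := eqVneq p (n - L); first by [].
  by apply: lexlt_zero_prefix (Hrev p Hp Hpn); rewrite ?size_rot ?size_rev ?Hs.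
rewrite andbT; case: (posnP p) => [->|Hp0]; first by rewrite rot0 lexle_refl.
have Sw : size w = size (rot p w) by rewrite size_rot.
by case/andP: (lexlt_zero_prefix (L := L) Sw ltac:(by rewrite Hs) Hz (Hrot p ltac:(lia))).
Qed.

Lemma dihedral_nonzero_prefix k n a t rv p : inA k n a -> t < n -> nth 0 a t != 0 -> p < n ->
  exists2 i, i <= t & nth 0 a (dihedral_index n rv p i) != 0.
Proof.
move=> HA Ht Hnz Hp; have /inAP [Hs _ Hmin] := HA.
case: (boolP [exists i : 'I_t.+1, nth 0 a (dihedral_index n rv p i) != 0]).
  by case/existsP => i Hi; exists i => //; rewrite -ltnS.
rewrite negb_exists => /forallP Hall; exfalso; move/eqP: Hnz; apply.
have Hy i : i < t.+1 -> nth 0 (dihedral rv p a) i = 0.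
  move=> Hi; rewrite nth_dihedral Hs; [|lia|lia].
  by apply/eqP; move: (Hall (Ordinal Hi)); rewrite negbK.
have /andP[Hle _] := Hmin rv p ltac:(by rewrite Hs).
have Hsz : size a = size (dihedral rv p a) by rewrite size_dihedral.
have HL : t.+1 <= size a by rewrite Hs.
have Hge i : i < t.+1 -> nth 0 (dihedral rv p a) i <= nth 0 a i by move=> Hi; rewrite Hy.
by rewrite (lexle_prefix_eq Hsz HL Hle Hge (ltnSn t)) Hy.
Qed.

Lemma raise_notinA k n a j : inA k n a -> j < n -> (nth 0 a j).+1 < k ->
  ~~ inA k n (set_nth 0 a j (nth 0 a j).+1) ->
  exists rv p q, [/\ p < n, j < q < n, dihedral_index n rv p q = j,
     forall i, i < j -> nth 0 (dihedral rv p a) i = nth 0 a i &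
     lexle (dihedral rv p (set_nth 0 a j (nth 0 a j).+1)) (set_nth 0 a j (nth 0 a j).+1)].
Proof.
move=> HA Hj Hk HnA; have /inAP [Hs Ha Hmin] := HA.
set x := nth 0 a j in Hk HnA *; set b := set_nth 0 a j x.+1 in HnA *.
have Sb : size b = n by rewrite size_set_nth_lt Hs.
have Hb : all (fun c => c < k) b.
  apply/(all_nthP 0) => i; rewrite Sb => Hi; rewrite nth_set_nth /=.
  by case: eqP => // _; apply: (all_nthP 0 Ha); rewrite Hs.
have [rv [p [Hp /andP[Hle Hne]]]] := notinA_dihedral Sb Hb HnA.
have [q Hq Hgq] := dihedral_index_surj rv Hp Hj.
set y0 := dihedral rv p a.
have Ey : dihedral rv p b = set_nth 0 y0 q x.+1.
  by rewrite /b -Hgq -Hs dihedral_set_nth ?Hs.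
have Ny0q : nth 0 y0 q = x by rewrite /y0 nth_dihedral ?Hs // Hgq.
have Sy0 : size y0 = size a by rewrite size_dihedral.
have /andP[Hay0 Hy0a] := Hmin rv p ltac:(by rewrite Hs).
rewrite Ey in Hle Hne; set y := set_nth 0 y0 q x.+1 in Hle Hne *.
have Hsand m : m <= n ->
    (forall i, i < m -> nth 0 y0 i + nth 0 b i <= nth 0 y i + nth 0 a i) ->
    forall i, i < m -> nth 0 y0 i = nth 0 a i /\ nth 0 y i = nth 0 b i.
  by move=> Hm; apply: lexle_sandwich; rewrite ?size_set_nth_lt ?Sy0 ?Sb ?Hs.
have Hgap i : i != j \/ q = j ->
    nth 0 y0 i + nth 0 b i <= nth 0 y i + nth 0 a i.
  rewrite /b /y !nth_set_nth /=.
  case: (eqVneq i q) => [->|Hiq]; case: (eqVneq _ j) => [Eij|Hij] //=.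
  - by rewrite Ny0q Eij -/x addnC.
  - by rewrite Ny0q leq_add2r.
  - by case=> // Eqj; move: Hiq; rewrite Eij Eqj eqxx.
have Hpre i : i < j -> nth 0 y0 i = nth 0 a i /\ nth 0 y i = nth 0 b i.
  apply: (Hsand j (ltnW Hj)) => l Hl.
  by apply: Hgap; left; rewrite neq_ltn Hl.
have Hjq : j <= q.
  rewrite leqNgt; apply/negP => Hqj; have [E1 E2] := Hpre q Hqj.
  move: E2; rewrite /y /b !nth_set_nth /= eqxx ifF; last by apply/eqP => E; rewrite E ltnn in Hqj.
  by rewrite -E1 Ny0q => /esym; apply: n_Sn.
have Hqj : q != j.
  apply/eqP => Eqj; have Hall := Hsand n (leqnn n) (fun i _ => Hgap i (or_intror Eqj)).
  have Ey0 : y0 = a by apply: (@eq_from_nth _ 0) => // i; rewrite Sy0 Hs => /Hall [].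
  have Eyb : y = b.
    by apply: (@eq_from_nth _ 0) => [|i]; rewrite size_set_nth_lt Sy0 ?Hs ?Sb // => /Hall [].
  by move: Hne Hy0a; rewrite Eyb -/y0 Ey0 !eqxx orbF => ->.
exists rv, p, q; split => //.
- by rewrite Hq andbT ltn_neqAle eq_sym Hqj Hjq.
- by move=> i /Hpre [].
- by rewrite Ey.
Qed.

Section FirstNonzero.

Variables (k n : nat) (a : seq nat) (t : nat).
Hypotheses (HA : inA k n a) (Ht : t < n) (Hz : forall i, i < t -> nth 0 a i = 0).

Let Hs : size a = n. Proof. by case/inAP: HA. Qed.

Let b := set_nth 0 a t (nth 0 a t).-1.

Let size_b : size b = n. Proof. by rewrite size_set_nth_lt Hs. Qed.

Let b_zero_prefix i : i < t -> nth 0 b i = 0.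
Proof. by move=> Hi; rewrite nth_set_nth /= ifF ?Hz //; lia. Qed.

Lemma lower_first_nonzero_dihedral rv p : 1 < nth 0 a t -> p < n ->
  lexle b (dihedral rv p b) && (rv ==> (dihedral rv p b != b)).
Proof.
move=> H2 Hp; have /inAP [_ _ Hmin] := HA.
have [q Hq Hgq] := dihedral_index_surj rv Hp Ht.
set y0 := dihedral rv p a.
have -> : dihedral rv p b = set_nth 0 y0 q (nth 0 a t).-1 by rewrite /b -Hgq -Hs dihedral_set_nth ?Hs.
have Ny0q : nth 0 y0 q = nth 0 a t by rewrite /y0 nth_dihedral ?Hs // Hgq.
have Sy0 : size y0 = n by rewrite size_dihedral.
have /andP[Hay0 Hy0a] := Hmin rv p ltac:(by rewrite Hs).
set y := set_nth 0 y0 q (nth 0 a t).-1.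
have Sy : size b = size y by rewrite /y size_set_nth_lt Sy0 ?size_b //; rewrite Sy0.
case: (boolP [exists i : 'I_t, nth 0 y i != 0]).
  case/existsP => i Hi.
  have Hex : exists2 i, i < t & nth 0 y i != 0 by exists i.
  have /andP[-> ->] := lexlt_zero_prefix Sy (ltac:(lia) : t <= size b) b_zero_prefix Hex.
  by rewrite implybT.
rewrite negb_exists => /forallP Hzero.
have Hyz i : i < t -> nth 0 y i = 0.
  by move=> Hi; apply/eqP; move: (Hzero (Ordinal Hi)); rewrite negbK.
have Hqt : t <= q.
  by rewrite leqNgt; apply/negP => Hqt; move: (Hyz q Hqt); rewrite nth_set_nth /= eqxx; lia.
have Hy0z i : i < t -> nth 0 y0 i = 0.
  by move=> Hi; move: (Hyz i Hi); rewrite nth_set_nth /= ifF //; lia.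
have Hxy0 : nth 0 a t <= nth 0 y0 t.
  by apply: lexle_nth; rewrite ?Sy0 ?Hs // => l Hl; rewrite Hz ?Hy0z.
case: (ltnP t q) => Htq.
  have Hlt : nth 0 b t < nth 0 y t by rewrite /b /y !nth_set_nth /= eqxx ifF; lia.
  have Hpre l : l < t -> nth 0 b l = nth 0 y l by move=> Hl; rewrite b_zero_prefix ?Hyz.
  have /andP[-> Hne] := lexlt_nth Sy (ltac:(lia) : t < size b) Hpre Hlt.
  by rewrite eq_sym Hne implybT.
(* the image fixes position [t], so it compares with [b] exactly as with [a] *)
have Eqt : q = t by lia.
have Ey0t : nth 0 y0 t = nth 0 a t by rewrite -{1}Eqt.
by rewrite /b /y Eqt lexle_set_nth ?eq_set_nth ?Sy0 ?Hs ?Ey0t //; apply/andP.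
Qed.

Lemma lower_first_nonzero_inA : 1 < nth 0 a t -> inA k n (set_nth 0 a t (nth 0 a t).-1).
Proof.
move=> H2; apply/inAP; split; rewrite -/b ?size_b //.
  apply/(all_nthP 0) => i; rewrite size_b => Hi; rewrite nth_set_nth /=.
  by case: eqP => _; [have := inA_nth_lt HA Ht; lia | apply: (inA_nth_lt HA)].
by move=> rv p; rewrite size_b; apply: lower_first_nonzero_dihedral.
Qed.

Hypotheses (Hnz : nth 0 a t != 0) (Hlt : nth 0 a t < nth 0 a (n - 2)).

(* [w] is the rotation of [LastSymbol k a] that starts with the new symbol [0]. *)
Let w := 0 :: take (n - 1) a.

Let Ht2 : t.+2 < n.
Proof.
case: (ltnP t.+2 n) => // H; exfalso.
have [Elt|Eeq] : n - 2 < t \/ n - 2 = t by lia.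
- by move: Hlt; rewrite (Hz Elt).
- by move: Hlt; rewrite Eeq ltnn.
Qed.

Let size_w : size w = n.
Proof. by rewrite /= size_takel ?Hs; lia. Qed.

Let nth_w j : j < n -> nth 0 w j = if j == 0 then 0 else nth 0 a (j - 1).
Proof. by case: j => [|j] Hj //=; rewrite nth_take ?subn1 //; lia. Qed.

Let nth_rot_w p i : p < n -> i < n ->
  nth 0 (rot p w) i = nth 0 w (rotation_index n p i).
Proof. by rewrite -{1 2 3}size_w; apply: nth_rot. Qed.

Let nth_rot_rev_w p i : p < n -> i < n ->
  nth 0 (rot p (rev w)) i = nth 0 w (n - 1 - rotation_index n p i).
Proof. by rewrite -{1 2 3 4}size_w; apply: nth_rot_rev. Qed.

Let w_zero_prefix i : i < t.+1 -> nth 0 w i = 0.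
Proof. by move=> Hi; rewrite nth_w; [case: eqP => // Hi0; apply: Hz | ]; lia. Qed.

Let a_n2_nonzero : nth 0 a (n - 2) != 0.
Proof. by apply/eqP => E; move: Hlt; rewrite E. Qed.

Lemma shifted_rot_nonzero p : 0 < p < n -> exists2 i, i < t.+1 & nth 0 (rot p w) i != 0.
Proof.
move=> /andP[Hp0 Hp].
have [i1 Hi1 Ha1] := dihedral_nonzero_prefix false HA Ht Hnz (ltac:(lia) : p - 1 < n).
rewrite /dihedral_index in Ha1.
(* the nonzero symbol of [a] found may be the one replaced by [0] in [w];
   then the symbol [a (n - 2)] just before it is nonzero *)
case: (eqVneq (rotation_index n p i1) 0) => Hr0.
  have Hi0 : 0 < i1 by move: Hr0; rewrite /rotation_index; case: ifP; lia.
  exists (i1 - 1); first lia.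
  rewrite nth_rot_w; [|lia|lia].
  have -> : rotation_index n p (i1 - 1) = (n - 2).+1.
    by move: Hr0; rewrite /rotation_index; do 2 case: ifP; lia.
  by rewrite nth_w /= ?subSS ?subn0 //; lia.
exists i1; first lia.
have Hr := rotation_index_lt Hp (ltac:(lia) : i1 < n).
rewrite nth_rot_w ?nth_w ?(negbTE Hr0) //; [|lia].
by rewrite (_ : rotation_index n p i1 - 1 = rotation_index n (p - 1) i1) //; move: Hr0;
  rewrite /rotation_index; do 2 case: ifP; lia.
Qed.

Lemma shifted_rev_nonzero p : p < n -> p != n - t.+1 ->
  exists2 i, i < t.+1 & nth 0 (rot p (rev w)) i != 0.
Proof.
move=> Hp Hpn.
(* reflection [p] of [w] is reflection [p'] of [a] away from the new symbol *)
have [p' Hp' Hshift] : exists2 p', p' < n & forall i, i < n -> rotation_index n p i != n - 1 ->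
    rotation_index n p' i = (rotation_index n p i).+1.
  exists (if p.+1 < n then p.+1 else 0) => [|i Hi]; first by case: ifP; lia.
  by rewrite /rotation_index; case: (ltnP p.+1 n) => H1; do 2 case: ifP; lia.
have [i1 Hi1 Ha1] := dihedral_nonzero_prefix true HA Ht Hnz Hp'.
rewrite /dihedral_index in Ha1.
have Hr := rotation_index_lt Hp (ltac:(lia) : i1 < n).
case: (eqVneq (rotation_index n p i1) (n - 1)) => Hr1.
  exists i1.+1; first by move: Hr1 Hpn; rewrite /rotation_index; case: ifP; lia.
  rewrite nth_rot_rev_w; [|lia|lia].
  have -> : rotation_index n p i1.+1 = 0 by move: Hr1; rewrite /rotation_index; do 2 case: ifP; lia.
  rewrite subn0 nth_w; last lia.
  have Hn1 : (n - 1 == 0) = false by apply/eqP; lia.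
  by rewrite Hn1 (_ : n - 1 - 1 = n - 2) //; lia.
exists i1; first lia.
rewrite nth_rot_rev_w; [|lia|lia].
have Hne0 : (n - 1 - rotation_index n p i1 == 0) = false by apply/eqP; lia.
rewrite nth_w ?Hne0; last lia.
have Hi1n := Hshift i1 (ltac:(lia)) Hr1.
by rewrite (_ : n - 1 - rotation_index n p i1 - 1 = n - 1 - rotation_index n p' i1) //; lia.
Qed.

Lemma shifted_lt_reflection :
  lexle w (rot (n - t.+1) (rev w)) && (rot (n - t.+1) (rev w) != w).
Proof.
have Sy : size w = size (rot (n - t.+1) (rev w)) by rewrite size_rot size_rev.
have Hpre l : l < t.+1 -> nth 0 w l = nth 0 (rot (n - t.+1) (rev w)) l.
  move=> Hl; rewrite w_zero_prefix // nth_rot_rev_w; [|lia|lia].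
  rewrite (_ : rotation_index n (n - t.+1) l = n - t.+1 + l); last by rewrite /rotation_index ifT //; lia.
  by rewrite w_zero_prefix //; lia.
have Hlt2 : nth 0 w t.+1 < nth 0 (rot (n - t.+1) (rev w)) t.+1.
  rewrite nth_rot_rev_w; [|lia|lia].
  rewrite (_ : rotation_index n (n - t.+1) t.+1 = 0); last by rewrite /rotation_index ifF; lia.
  rewrite subn0 (_ : n - 1 = (n - 2).+1); last lia.
  by rewrite /= !nth_take //; lia.
by rewrite eq_sym; apply: (lexlt_nth Sy) Hpre Hlt2; rewrite size_w; lia.
Qed.

Lemma shifted_inA : inA k n w.
Proof.
apply: (inA_zero_prefix (L := t.+1)) size_w _ _ w_zero_prefix shifted_rot_nonzero
  shifted_rev_nonzero shifted_lt_reflection; last lia.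
apply/(all_nthP 0) => i; rewrite size_w => Hi; rewrite nth_w //.
by case: eqP => _; [have := inA_nth_lt HA Ht; lia | apply: (inA_nth_lt HA); lia].
Qed.

Lemma LastSymbol_inA : nth 0 a (n - 1) = k - 1 -> inA k n (LastSymbol k a).
Proof.
move=> Hlast; have Hk0 : 0 < k by have := inA_nth_lt HA Ht; lia.
have -> : LastSymbol k a = neck (rot 1 w).
  rewrite /LastSymbol Hs (_ : n.-1 = n - 1) ?Hlast; last lia.
  by rewrite (_ : (k - 1).+1 = k) ?modnn; [rewrite /w /rot /= drop0 take0 | lia].
rewrite neck_rot; first exact: shifted_inA.
  exact: inA_necklace shifted_inA.
by rewrite size_w; lia.
Qed.

End FirstNonzero.

Lemma iota0_tail n m : m <= n -> iota 0 n = iota 0 (n - m) ++ iota (n - m) m.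
Proof. by move=> Hm; rewrite -{1}(subnK Hm) iotaD add0n. Qed.

Lemma LastNonMax_last k a : 0 < size a -> nth 0 a (size a - 1) != k - 1 ->
  LastNonMax k a = set_nth 0 a (size a - 1) (nth 0 a (size a - 1)).+1.
Proof.
move=> Hn Hne; rewrite /LastNonMax /nonmax_idx (@iota0_tail _ 1) //.
rewrite filter_cat /= Hne last_cat /= set_nthE ifT; last lia.
by rewrite (_ : (size a - 1).+1 = size a) ?subnn ?drop_size //; lia.
Qed.

Lemma LastNonMax_second_last k a : 1 < size a -> nth 0 a (size a - 1) = k - 1 ->
  nth 0 a (size a - 2) != k - 1 ->
  LastNonMax k a = set_nth 0 a (size a - 2) (nth 0 a (size a - 2)).+1.
Proof.
move=> Hn Hl Hne; have E : (size a - 2).+1 = size a - 1 by lia.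
rewrite /LastNonMax /nonmax_idx (@iota0_tail _ 2) // filter_cat /= E Hne Hl eqxx.
rewrite last_cat /= set_nthE ifT; last lia.
rewrite E (_ : size a - (size a - 1) = 1); last lia.
by rewrite (drop_nth 0) ?E ?Hl ?drop_oversize //=; lia.
Qed.

Lemma SecondLastNonMax3_set_nth a : 3 <= size a -> nth 0 a (size a - 1) = 2 ->
  nth 0 a (size a - 2) != 2 -> nth 0 a (size a - 3) != 2 ->
  SecondLastNonMax 3 a = set_nth 0 a (size a - 3) (nth 0 a (size a - 3)).+1.
Proof.
move=> Hn H1 H2 H3; have E3 : (size a - 3).+1 = size a - 2 by lia.
have E2 : (size a - 2).+1 = size a - 1 by lia.
rewrite /SecondLastNonMax /nonmax_idx (@iota0_tail _ 3) //= E3 E2 filter_cat /= H1 H2 H3 /=.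
set xs := filter _ _; rewrite size_cat /= (_ : size xs + 2 - 2 = size xs); last lia.
by rewrite nth_cat ltnn subnn set_nthE ifT //; lia.
Qed.

Definition pal_prefix m (s : seq nat) := forall i, i < m -> nth 0 s i = nth 0 s (m - 1 - i).

Lemma inA_nth0_min k n a p : inA k n a -> p < n -> nth 0 a 0 <= nth 0 a p.
Proof.
move=> HA Hp; have /inAP [Hs _ Hmin] := HA.
have /andP[Hle _] := Hmin false p ltac:(by rewrite Hs).
have Hpre l : l < 0 -> nth 0 a l = nth 0 (dihedral false p a) l by [].
have := lexle_nth (esym (size_dihedral _ _ _)) Hle Hpre ltac:(by rewrite Hs; lia).
by rewrite nth_dihedral Hs //; [rewrite /dihedral_index /rotation_index addn0 Hp | lia].
Qed.

Lemma LastNonMax_notinA_last k n a : inA k n a -> 0 < n -> ~~ inA k n (LastNonMax k a) ->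
  nth 0 a (n - 1) = k - 1.
Proof.
move=> HA Hn HnA; have Hs : size a = n by case/inAP: HA.
have Hlt := inA_nth_lt HA (ltac:(lia) : n - 1 < n).
case: (eqVneq (nth 0 a (n - 1)) (k - 1)) => // Hne; exfalso.
have E := @LastNonMax_last k a; rewrite Hs in E; rewrite E // in HnA.
have [rv [p [q [_ Hq _ _ _]]]] := raise_notinA HA (ltac:(lia) : n - 1 < n) (ltac:(lia)) HnA.
lia.
Qed.

Lemma LastNonMax_notinA_second_last k n a : inA k n a -> 3 <= n ->
  nth 0 a (n - 1) = k - 1 -> nth 0 a (n - 2) != k - 1 -> ~~ inA k n (LastNonMax k a) ->
  nth 0 a (n - 2) = k - 2 /\ pal_prefix (n - 2) a.
Proof.
move=> HA Hn Hl Hne HnA; have Hs : size a = n by case/inAP: HA.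
have Hlt := inA_nth_lt HA (ltac:(lia) : n - 2 < n).
have E := @LastNonMax_second_last k a; rewrite Hs in E; rewrite E // in HnA; last lia.
have [rv [p [q [Hp Hq Hg Hpre Hle]]]] := raise_notinA HA (ltac:(lia) : n - 2 < n) (ltac:(lia)) HnA.
have Eq : q = n - 1 by lia.
subst q; case: rv Hg Hpre Hle => Hg Hpre Hle; last first.
  have Ep : p = n - 1 by move: Hg; rewrite /dihedral_index /rotation_index; case: ifP; lia.
  have := Hpre 0 ltac:(lia); rewrite nth_dihedral Hs; try lia.
  rewrite /dihedral_index /rotation_index Ep addn0 ifT ?Hl; last lia.
  by have := inA_nth0_min HA (ltac:(lia) : n - 2 < n); lia.
have Ep : p = 2 by move: Hg; rewrite /dihedral_index /rotation_index; case: ifP; lia.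
subst p.
have Hpal : pal_prefix (n - 2) a.
  move=> i Hi; rewrite -Hpre; last lia.
  rewrite nth_dihedral Hs /dihedral_index /rotation_index ?ifT; try lia.
  by congr nth; lia.
split => //.
set x := nth 0 a (n - 2) in Hlt Hne Hle *; set b := set_nth 0 a (n - 2) x.+1 in Hle.
have Eb : dihedral true 2 b = set_nth 0 (dihedral true 2 a) (n - 1) x.+1.
  by rewrite /b -Hg -Hs dihedral_set_nth ?Hs //; lia.
have Nb i : nth 0 b i = if i == n - 2 then x.+1 else nth 0 a i by rewrite nth_set_nth.
have Sb : size (dihedral true 2 b) = size b by rewrite size_dihedral.
have Hpre2 l : l < n - 2 -> nth 0 (dihedral true 2 b) l = nth 0 b l.
  move=> Hl2; rewrite Eb nth_set_nth /= ifF; last lia.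
  by rewrite Hpre // Nb ifF //; lia.
have Hn2 : n - 2 < size (dihedral true 2 b) by rewrite size_dihedral /b size_set_nth_lt ?Hs; lia.
have := lexle_nth Sb Hle Hpre2 Hn2.
rewrite Eb nth_set_nth /= ifF ?Nb ?eqxx; last lia.
rewrite nth_rot_rev Hs; [|lia|lia].
rewrite /rotation_index ifF; last lia.
by rewrite (_ : n - 1 - (2 + (n - 2) - n) = n - 1) ?Hl; lia.
Qed.

Lemma eq_rnk3 n a : size a = n -> 2 <= n -> nth 0 a (n - 2) = 1 -> nth 0 a (n - 1) = 2 ->
  (forall i, i < n - 2 -> nth 0 a i = 0) -> a = rnk n 3.
Proof.
move=> Hs Hn H2 H1 Hz.
apply: (@eq_from_nth _ 0); first by rewrite Hs /rnk size_cat size_nseq /=; lia.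
move=> i; rewrite Hs => Hi; rewrite /rnk nth_cat size_nseq.
case: ifP => Hi2; first by rewrite nth_nseq Hi2 Hz.
have [->|->] : i = n - 2 \/ i = n - 1 by lia.
- by rewrite subnn H2.
- by rewrite (_ : n - 1 - (n - 2) = 1) ?H1 //; lia.
Qed.

Section RaiseThirdLast.

Variables (n : nat) (a : seq nat).
Hypotheses (HA : inA 3 n a) (Hn : 4 <= n) (Hr : a <> rnk n 3).
Hypotheses (H1 : nth 0 a (n - 1) = 2) (H2 : nth 0 a (n - 2) = 1) (H3 : nth 0 a (n - 3) = 0).
Hypotheses (Hpal : pal_prefix (n - 2) a) (Ha1 : nth 0 a 1 < 2).

Let Hs : size a = n. Proof. by case/inAP: HA. Qed.

Let prefix_not_zero : ~ (forall i, i < n - 2 -> nth 0 a i = 0).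
Proof. by move=> Hz; apply: Hr; apply: eq_rnk3 => //; lia. Qed.

Lemma third_last_rotation_absurd p q : n - 3 < q < n -> rotation_index n p q = n - 3 ->
  nth 0 a (rotation_index n p 0) = nth 0 a 0 -> False.
Proof.
move=> Hq; rewrite /rotation_index addn0; case: ifP => Hpn Hg; first lia.
have [Ep|Ep] : p = n - 1 \/ p = n - 2 by lia.
all: rewrite Ep ifT; last lia.
all: rewrite ?H1 ?H2 Hpal; last lia.
all: by rewrite subn0 (_ : n - 2 - 1 = n - 3) ?H3; lia.
Qed.

Lemma third_last_reflection_absurd p q : n - 3 < q < n ->
  n - 1 - rotation_index n p q = n - 3 ->
  (forall i, i < n - 3 -> nth 0 a (n - 1 - rotation_index n p i) = nth 0 a i) -> False.
Proof.
move=> Hq; have [->|->] : q = n - 2 \/ q = n - 1 by lia.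
  rewrite /rotation_index; case: ifP => Hpn Hg Hpre.
    have En : n = 4 by lia.
    have Ha1' : nth 0 a 1 = 0 by move: H3; rewrite En.
    have Ha0 : nth 0 a 0 = 0 by rewrite Hpal En.
    by apply: prefix_not_zero => i Hi; have [->|->] : i = 0 \/ i = 1 by lia.
  have Ep : p = 4 by lia.
  move: (Hpre (n - 4) ltac:(lia)); rewrite Ep ifF; last lia.
  rewrite (_ : n - 1 - (4 + (n - 4) - n) = n - 1); last lia.
  rewrite H1 Hpal; last lia.
  by rewrite (_ : n - 2 - 1 - (n - 4) = 1); lia.
rewrite /rotation_index; case: ifP => Hpn Hg Hpre; first lia.
(* together with the palindrome this reflection makes [a] constant on its prefix *)
have Ep : p = 3 by lia.
have Hstep i : i < n - 3 -> nth 0 a i.+1 = nth 0 a i.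
  move=> Hi; rewrite Hpal; last lia.
  rewrite -(Hpre i Hi) Ep ifT; last lia.
  by congr nth; lia.
have Hconst i : i < n - 2 -> nth 0 a i = nth 0 a 0.
  by elim: i => [|i IH] Hi //; rewrite Hstep ?IH //; lia.
apply: prefix_not_zero => i Hi; rewrite Hconst // Hpal; last lia.
by rewrite (_ : n - 2 - 1 - 0 = n - 3) //; lia.
Qed.

Lemma raise_third_last_inA : inA 3 n (set_nth 0 a (n - 3) 1).
Proof.
apply/negPn/negP => HnA.
have HnA' : ~~ inA 3 n (set_nth 0 a (n - 3) (nth 0 a (n - 3)).+1) by rewrite H3.
have [rv [p [q [Hp Hq Hg Hpre _]]]] :=
  raise_notinA HA (ltac:(lia) : n - 3 < n) (ltac:(rewrite H3; lia)) HnA'.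
have {}Hpre i : i < n - 3 -> nth 0 a (dihedral_index n rv p i) = nth 0 a i.
  by move=> Hi; rewrite -(Hpre i Hi) nth_dihedral Hs //; lia.
move: Hg Hpre; case: rv; rewrite /dihedral_index => Hg Hpre.
- exact: third_last_reflection_absurd Hq Hg Hpre.
- exact: third_last_rotation_absurd Hq Hg (Hpre 0 ltac:(lia)).
Qed.

End RaiseThirdLast.

Lemma inA_nth1_le k n a p : inA k n a -> p.+1 < n -> nth 0 a p = nth 0 a 0 ->
  nth 0 a 1 <= nth 0 a p.+1.
Proof.
move=> HA Hp Hap; have /inAP [Hs _ Hmin] := HA.
have /andP[Hle _] := Hmin false p ltac:(lia).
have Hpre l : l < 1 -> nth 0 a l = nth 0 (dihedral false p a) l.
  move=> Hl; have -> : l = 0 by lia.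
  by rewrite nth_dihedral Hs /dihedral_index /rotation_index ?addn0 ?ifT; try lia.
have := lexle_nth (esym (size_dihedral _ _ _)) Hle Hpre ltac:(lia).
rewrite nth_dihedral Hs; [|lia|lia].
by rewrite /dihedral_index /rotation_index ifT ?addn1; lia.
Qed.

Lemma lower_leading_one_inA k n a : inA k n a -> 4 <= n -> nth 0 a 0 = 1 ->
  1 < nth 0 a (n - 1) -> nth 0 a (n - 2) = 1 -> nth 0 a (n - 3) = 1 ->
  inA k n (set_nth 0 a 0 0).
Proof.
move=> HA Hn H0 H1 H2 H3; have Hs : size a = n by case/inAP: HA.
have Hpos i : i < n -> nth 0 a i != 0.
  by move=> Hi; have := inA_nth0_min HA Hi; rewrite H0; case: (nth 0 a i).
have Ha1 : nth 0 a 1 <= 1.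
  have := inA_nth1_le HA (ltac:(lia) : (n - 3).+1 < n) ltac:(by rewrite H0 H3).
  by rewrite (_ : (n - 3).+1 = n - 2) ?H2 //; lia.
set w := set_nth 0 a 0 0.
have Sw : size w = n by rewrite size_set_nth_lt Hs; lia.
have Nw i : nth 0 w i = if i == 0 then 0 else nth 0 a i by rewrite nth_set_nth.
apply: (inA_zero_prefix (L := 1)) => //.
- apply/(all_nthP 0) => i; rewrite Sw => Hi; rewrite Nw.
  by case: eqP => _; [have := inA_nth_lt HA Hi; lia | apply: (inA_nth_lt HA)].
- lia.
- by move=> i Hi; rewrite Nw ifT //; lia.
- move=> p /andP[Hp0 Hp]; exists 0 => //.
  rewrite nth_rot Sw; [|lia|lia].
  rewrite /rotation_index addn0 ifT // Nw ifF; [exact: Hpos | lia].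
- move=> p Hp Hpn; exists 0 => //.
  rewrite nth_rot_rev Sw; [|lia|lia].
  rewrite /rotation_index addn0 ifT // Nw ifF; [apply: Hpos | ]; lia.
rewrite eq_sym.
have Sy : size w = size (rot (n - 1) (rev w)) by rewrite size_rot size_rev.
have Hpre l : l < 1 -> nth 0 w l = nth 0 (rot (n - 1) (rev w)) l.
  move=> Hl; have -> : l = 0 by lia.
  rewrite nth_rot_rev Sw; [|lia|lia].
  by rewrite /rotation_index addn0 ifT ?subnn //; lia.
have Hlt : nth 0 w 1 < nth 0 (rot (n - 1) (rev w)) 1.
  rewrite nth_rot_rev Sw; [|lia|lia].
  rewrite /rotation_index ifF; last lia.
  rewrite (_ : n - 1 - (n - 1 + 1 - n) = n - 1); last lia.
  by rewrite !Nw /= ifF; lia.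
by apply: (lexlt_nth Sy) Hpre Hlt; rewrite Sw; lia.
Qed.

Lemma pal_prefix_split n a : size a = n -> 4 <= n -> nth 0 a 0 = 0 ->
  nth 0 a (n - 2) = 1 -> nth 0 a (n - 1) = 2 -> pal_prefix (n - 2) a ->
  exists gamma, gamma = rev gamma /\ a = 0 :: gamma ++ [:: 0; 1; 2].
Proof.
move=> Hs Hn H0 H2 H1 Hpal; exists (take (n - 4) (drop 1 a)).
have Sg : size (take (n - 4) (drop 1 a)) = n - 4 by rewrite size_takel // size_drop Hs; lia.
have Ng i : i < n - 4 -> nth 0 (take (n - 4) (drop 1 a)) i = nth 0 a i.+1.
  by move=> Hi; rewrite nth_take // nth_drop add1n.
split.
  apply: (@eq_from_nth _ 0); first by rewrite size_rev.
  move=> i; rewrite Sg => Hi; rewrite nth_rev Sg // !Ng; [|lia|lia].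
  rewrite Hpal; last lia.
  by congr nth; lia.
apply: (@eq_from_nth _ 0); first by rewrite /= size_cat Sg Hs /=; lia.
move=> [|i]; rewrite Hs => Hi //=.
rewrite nth_cat Sg; case: ifP => Hin; first by rewrite Ng.
have [->|[->|->]] : i = n - 4 \/ i = n - 3 \/ i = n - 2 by lia.
- rewrite subnn /= Hpal; last lia.
  by rewrite (_ : n - 2 - 1 - (n - 4).+1 = 0) //; lia.
- have E1 : n - 3 - (n - 4) = 1 by lia.
  have E2 : (n - 3).+1 = n - 2 by lia.
  by rewrite E1 E2.
- have E1 : n - 2 - (n - 4) = 2 by lia.
  have E2 : (n - 2).+1 = n - 1 by lia.
  by rewrite E1 E2.
Qed.

Lemma first_nonzeroP (a : seq nat) : has (fun x => x != 0) a ->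
  exists t, [/\ t < size a, forall i, i < t -> nth 0 a i = 0, nth 0 a t != 0 &
    FirstNonMin a = set_nth 0 a t (nth 0 a t).-1].
Proof.
move=> Hh; exists (find (fun x => x != 0) a); split.
- by rewrite -has_find.
- by move=> i Hi; have := before_find 0 Hi; move/negbFE/eqP.
- by have := nth_find 0 Hh.
rewrite /FirstNonMin set_nthE -has_find Hh; congr cat.
apply: (@eq_from_nth _ 0); first by rewrite size_nseq size_takel // ltnW // -has_find.
move=> i; rewrite size_nseq => Hi; rewrite nth_nseq Hi nth_take //.
by have := before_find 0 Hi; move/negbFE/eqP.
Qed.

Lemma lower_first_one_notinA3 n a t : inA 3 n a -> 4 <= n -> a <> rnk n 3 ->
  t < n -> (forall i, i < t -> nth 0 a i = 0) -> nth 0 a t = 1 ->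
  nth 0 a (n - 1) = 2 -> nth 0 a (n - 2) = 1 -> pal_prefix (n - 2) a ->
  ~~ inA 3 n (set_nth 0 a t 0) ->
  (exists gamma, gamma = rev gamma /\ a = 0 :: gamma ++ [:: 0; 1; 2]) /\
  inA 3 n (SecondLastNonMax 3 a).
Proof.
move=> HA Hn Hr Ht Hz Hat H1 H2 Hpal HnA; have Hs : size a = n by case/inAP: HA.
have Ea0 : nth 0 a (n - 3) = nth 0 a 0.
  rewrite Hpal; last lia.
  by rewrite (_ : n - 2 - 1 - (n - 3) = 0) //; lia.
have Ht0 : 0 < t.
  case: (posnP t) => // Et; exfalso; move: Hat HnA; rewrite Et => Ha0 /negP; apply.
  by apply: lower_leading_one_inA; rewrite ?H1 ?H2 ?Ea0.
have A0 : nth 0 a 0 = 0 by apply: Hz.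
have A3 : nth 0 a (n - 3) = 0 by rewrite Ea0.
have A1 : nth 0 a 1 < 2.
  case: (ltnP 1 t) => H; first by rewrite Hz.
  have Et : t = 1 by lia.
  by move: Hat; rewrite Et => ->.
split; first exact: pal_prefix_split Hs Hn A0 H2 H1 Hpal.
have E := @SecondLastNonMax3_set_nth a; rewrite Hs A3 in E.
have -> : SecondLastNonMax 3 a = set_nth 0 a (n - 3) 1 by apply: E; rewrite ?H1 ?H2 ?A3 //; lia.
exact: raise_third_last_inA.
Qed.

Theorem mainTheorem8 (n k : nat) (alpha : seq nat) :
  ((3 <= n /\ 4 <= k) \/ (4 <= n /\ k = 3)) ->
  inA k n alpha -> alpha <> rnk n k ->
  ~~ inA k n (LastNonMax k alpha) ->
  ~~ inA k n (LastSymbol k alpha) ->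
  (4 <= k -> inA k n (FirstNonMin alpha)) /\
  (k = 3 -> ~~ inA 3 n (FirstNonMin alpha) ->
     (exists gamma : seq nat, gamma = rev gamma /\
        alpha = 0 :: gamma ++ [:: 0; 1; 2]) /\
     inA 3 n (SecondLastNonMax 3 alpha)).
Proof.
move=> Hnk HA Hr HLNM HLS.
have [Hn3 Hk3] : 3 <= n /\ 3 <= k by case: Hnk => -[]; lia.
have Hs : size alpha = n by case/inAP: HA.
have Hl := LastNonMax_notinA_last HA (ltac:(lia)) HLNM.
have Hhas : has (fun x => x != 0) alpha.
  apply/(has_nthP 0); exists (n - 1); first by rewrite Hs; lia.
  by rewrite Hl; apply/eqP; lia.
have [t [Ht Hz Hnz ->]] := first_nonzeroP Hhas; rewrite Hs in Ht.
have Hbound : nth 0 alpha (n - 2) <= nth 0 alpha t.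
  by rewrite leqNgt; apply: contraNN HLS => Hlt; apply: (LastSymbol_inA HA Ht Hz Hnz Hlt Hl).
have Hsecond : nth 0 alpha (n - 2) = k - 1 \/
    nth 0 alpha (n - 2) = k - 2 /\ pal_prefix (n - 2) alpha.
  case: (eqVneq (nth 0 alpha (n - 2)) (k - 1)) => Hne; [by left | right].
  exact: LastNonMax_notinA_second_last.
have Hlower : 1 < nth 0 alpha t -> inA k n (set_nth 0 alpha t (nth 0 alpha t).-1).
  exact: lower_first_nonzero_inA.
split => [Hk4|Ek HnF]; first by apply: Hlower; case: Hsecond => [|[]]; lia.
subst k; have Hat : nth 0 alpha t = 1.
  by case: (ltnP 1 (nth 0 alpha t)) => H; [rewrite Hlower in HnF | lia].
have [H2 Hpal] : nth 0 alpha (n - 2) = 1 /\ pal_prefix (n - 2) alpha.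
  by case: Hsecond => [E2|[E2 Hp]]; [exfalso; lia | split].
have Hn4 : 4 <= n by case: Hnk => -[]; lia.
rewrite Hat in HnF.
exact: lower_first_one_notinA3 HA Hn4 Hr Ht Hz Hat Hl H2 Hpal HnF.
Qed.
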